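(* Let $\mathcal{N}(\mathcal{K})=(\mathcal{S},\mathcal{C},\mathcal{R},\mathcal{K})$ be a reaction-weighted chemical reaction network and let $\tilde{\mathcal{N}}(\tilde{\mathcal{B}})=(\tilde{\mathcal{S}},\tilde{\mathcal{C}},\tilde{\mathcal{C}}_K,\tilde{\mathcal{R}},\tilde{\mathcal{B}})$ be an improper reaction-weighted translation of $\mathcal{N}(\mathcal{K})$ (with associated maps $h$, $h_K$). Suppose that $(\tilde{\mathcal{S}},\tilde{\mathcal{C}},\tilde{\mathcal{R}})$ is weakly reversible, that its deficiency is $\tilde\delta=0$, that $\tilde S_I\subseteq\tilde S_K$, and that there is a resolving complex set $\tilde{\mathcal{C}}_R$ with $\tilde{\mathcal{C}}_I\cap\tilde{\mathcal{C}}_R=\emptyset$. Suppose furthermore that: for every $p'\in\tilde{\mathcal{C}}_I$ there is a $k'\in\tilde{\mathcal{C}}(\tilde{\mathcal{B}})$, $k'\ne p'$, such that for every $i'\in\tilde{\mathcal{C}}_R$ and every directed path in $(\tilde{\mathcal{C}},\tilde{\mathcal{R}})$ from $p'$ to $i'$, the complex $k'$ lies on that path. Then $\mathcal{N}(\mathcal{K})$ and $\tilde{\mathcal{N}}(\tilde{\mathcal{B}})$ are steady state resolvable.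
   Context: A chemical reaction network $(\mathcal{S},\mathcal{C},\mathcal{R})$ consists of species $X_1,\dots,X_n$, complexes $C_1,\dots,C_m$ (identified with indices $1,\dots,m$) with pairwise distinct stoichiometric vectors $y_i\in\mathbb{Z}_{\ge0}^n$, and reactions $\mathcal{R}\subseteq\mathcal{C}\times\mathcal{C}$ (no self-loops); it is viewed as a directed graph on $\mathcal{C}$. A path from $C_i$ to $C_j$ is a sequence of distinct complexes $C_i=C_{\nu(1)}\to\cdots\to C_{\nu(l)}=C_j$ with each arrow a reaction. Linkage classes are the connected components of the underlying undirected graph; the network is weakly reversible if every linkage class is strongly connected. The stoichiometric subspace is $S=\mathrm{span}\{y_j-y_i:(i,j)\in\mathcal{R}\}$, $s=\dim S$, and the deficiency is $\delta=m-\ell-s$ with $\ell$ the number of linkage classes. A reaction-weight set $\mathcal{K}=\{k(i,j)\}$ has $k(i,j)>0$ iff $(i,j)\in\mathcal{R}$ and $k(i,j)=0$ otherwise. The mass action system of $\mathcal{N}(\mathcal{K})$ is $\dot{\mathbf{x}}=YA(\mathcal{K})\Psi(\mathbf{x})$, where $Y$ has columns $y_i$, $A(\mathcal{K})_{ij}=k(j,i)$ for $i\ne j$, $A(\mathcal{K})_{ii}=-\sum_l k(i,l)$, $\Psi(\mathbf{x})_i=\mathbf{x}^{y_i}$. A generalized chemical reaction network $(\mathcal{S},\mathcal{C},\mathcal{C}_K,\mathcal{R})$ is a network $(\mathcal{S},\mathcal{C},\mathcal{R})$ with kinetic complexes $(C_K)_i$ (vectors $(y_K)_i$) in one-to-one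 correspondence with $\mathcal{C}$; its generalized mass action system is $\dot{\mathbf{x}}=YA(\mathcal{K})\Psi_K(\mathbf{x})$ with $\Psi_K(\mathbf{x})_i=\mathbf{x}^{(y_K)_i}$. Graph notions refer to $(\mathcal{S},\mathcal{C},\mathcal{R})$. Kinetic-order subspace: $S_K=\mathrm{span}\{(y_K)_j-(y_K)_i:(i,j)\in\mathcal{R}\}$. Kinetically-relevant complexes $\mathcal{C}(\mathcal{K})$: those $i$ with $\sum_{j\ne i}k(i,j)(y_j-y_i)\ne0$. Reaction-weighted translation: $\tilde{\mathcal{N}}(\tilde{\mathcal{B}})$ (complexes $1,\dots,\tilde m$, vectors $\tilde y_{i'}$, kinetic vectors $(\tilde y_K)_{i'}$, weights $\tilde b(i',j')$, kinetically-relevant set $\tilde{\mathcal{C}}(\tilde{\mathcal{B}})$) is a reaction-weighted translation of $\mathcal{N}(\mathcal{K})$ if (1) there is a surjection $h:\mathcal{C}(\mathcal{K})\to\tilde{\mathcal{C}}(\tilde{\mathcal{B}})$ and numbers $\lambda(i,j')\ge0$ with (a) $\lambda(i,j')>0\Rightarrow(h(i),j')\in\tilde{\mathcal{R}}$, (b) $\sum_{\{i:h(i)=i'\}}\lambda(i,j')=\tilde b(i',j')$, (c) $\sum_{j\ne i}k(i,j)(y_j-y_i)=\sum_{j'\ne h(i)}\lambda(i,j')(\tilde y_{j'}-\tilde y_{h(i)})$; and (2) there is an injection $h_K:\tilde{\mathcal{C}}(\tilde{\mathcal{B}})\to\mathcal{C}(\mathcal{K})$ with $h(h_K(i'))=i'$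 and $(\tilde y_K)_{i'}=y_{h_K(i')}$. It is improper if $h$ is not injective. $\tilde{\mathcal{C}}_I=\{k'\in\tilde{\mathcal{C}}(\tilde{\mathcal{B}}):h(i)=h(j)=k'\text{ for some }i\ne j\}$; $h^{-1}(k')=\{i:h(i)=k'\}$; $\tilde S_I=\mathrm{span}\{y_j-y_i:i,j\in h^{-1}(k'),k'\in\tilde{\mathcal{C}}_I\}$; $\tilde S_K$ is the kinetic-order subspace of $\tilde{\mathcal{N}}$. Resolving complex set (when $\tilde{\mathcal{N}}$ is weakly reversible and $\tilde S_I\subseteq\tilde S_K$): $\tilde{\mathcal{C}}_R\subseteq\tilde{\mathcal{C}}(\tilde{\mathcal{B}})$ such that for every $i,j\in h^{-1}(k')$, $k'\in\tilde{\mathcal{C}}_I$, there are constants $c(i',j')$, $i'<j'$, with (1) $y_j-y_i=\sum_{i'<j'}c(i',j')(y_{h_K(j')}-y_{h_K(i')})$; (2) $c(i',j')\ne0$ implies $i',j'$ in the same linkage class of $\tilde{\mathcal{N}}$; (3) $c(i',j')\ne0$ implies $i',j'\in\tilde{\mathcal{C}}_R$. Steady state equivalence: the two (generalized) mass action systems have the same steady states. Steady state resolvable: there exists a reaction-weight set $\tilde{\mathcal{K}}$ for $(\tilde{\mathcal{S}},\tilde{\mathcal{C}},\tilde{\mathcal{C}}_K,\tilde{\mathcal{R}})$ such that $\mathcal{N}(\mathcal{K})$ and $\tilde{\mathcal{N}}(\tilde{\mathcal{K}})$ are steady state equivalent. *)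

From HB Require Import structures.
From mathcomp Require Import all_boot all_order all_algebra.
From mathcomp Require Import reals exp.
Set Implicit Arguments. Unset Strict Implicit. Unset Printing Implicit Defensive.
Import Order.TTheory GRing.Theory Num.Theory.
Local Open Scope ring_scope.

Section CRN.
Variable R : realType.
Variable n : nat. (* number of species *)

Definition cvec (v : 'I_n -> nat) : 'rV[R]_n := \row_s (v s)%:R.
Definition rvec (v : 'I_n -> R) : 'rV[R]_n := \row_s v s.

Section Net.
Variable m : nat. (* number of complexes *)

Definition is_crn (y : 'I_m -> 'I_n -> nat) (Rr : rel 'I_m) : Prop :=
  injective y /\ forall i, ~~ Rr i i.

Definition weight_set (Rr : rel 'I_m) (k : 'I_m -> 'I_m -> R) : Prop :=
  forall i j, (Rr i j -> 0 < k i j) /\ (~~ Rr i j -> k i j = 0).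

Definition symR (Rr : rel 'I_m) : rel 'I_m := fun a b => Rr a b || Rr b a.

Definition weakly_reversible (Rr : rel 'I_m) : Prop :=
  forall i j, connect (symR Rr) i j -> connect Rr i j.

Definition n_linkage (Rr : rel 'I_m) : nat := n_comp (symR Rr) predT.

Definition stoich_space (y : 'I_m -> 'I_n -> nat) (Rr : rel 'I_m) : 'M[R]_n :=
  (\sum_(p : 'I_m * 'I_m | Rr p.1 p.2) <<cvec (y p.2) - cvec (y p.1)>>)%MS.

Definition kin_space (yK : 'I_m -> 'I_n -> R) (Rr : rel 'I_m) : 'M[R]_n :=
  (\sum_(p : 'I_m * 'I_m | Rr p.1 p.2) <<rvec (yK p.2) - rvec (yK p.1)>>)%MS.

Definition deficiency (y : 'I_m -> 'I_n -> nat) (Rr : rel 'I_m) : int :=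
  (m%:Z - (n_linkage Rr)%:Z - (\rank (stoich_space y Rr))%:Z)%R.

Definition react_vec (y : 'I_m -> 'I_n -> nat) (k : 'I_m -> 'I_m -> R) (i : 'I_m)
  : 'rV[R]_n := \sum_(j | j != i) k i j *: (cvec (y j) - cvec (y i)).

Definition kin_rel (y : 'I_m -> 'I_n -> nat) (k : 'I_m -> 'I_m -> R) : pred 'I_m :=
  fun i => react_vec y k i != 0.

Definition Ymx (y : 'I_m -> 'I_n -> nat) : 'M[R]_(n, m) := \matrix_(s, i) (y i s)%:R.
Definition Amx (k : 'I_m -> 'I_m -> R) : 'M[R]_m :=
  \matrix_(i, j) if i == j then - \sum_(l | l != i) k i l else k j i.
Definition Psi (yK : 'I_m -> 'I_n -> R) (x : 'cV[R]_n) : 'cV[R]_m :=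
  \col_i \prod_s (x s 0) `^ (yK i s).

Definition gma_rhs (y : 'I_m -> 'I_n -> nat) (k : 'I_m -> 'I_m -> R)
  (yK : 'I_m -> 'I_n -> R) (x : 'cV[R]_n) : 'cV[R]_n :=
  Ymx y *m Amx k *m Psi yK x.

Definition ma_rhs (y : 'I_m -> 'I_n -> nat) (k : 'I_m -> 'I_m -> R) (x : 'cV[R]_n)
  : 'cV[R]_n := gma_rhs y k (fun i s => (y i s)%:R) x.
End Net.

Definition pos_vec (x : 'cV[R]_n) : Prop := forall s, 0 < x s 0.

Section Transl.
Variables (m mt : nat).
Variables (y : 'I_m -> 'I_n -> nat) (Rr : rel 'I_m) (k : 'I_m -> 'I_m -> R).
Variables (ty : 'I_mt -> 'I_n -> nat) (tyK : 'I_mt -> 'I_n -> R) (tR : rel 'I_mt)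
          (tb : 'I_mt -> 'I_mt -> R).
Variables (h : 'I_m -> 'I_mt) (hK : 'I_mt -> 'I_m) (lam : 'I_m -> 'I_mt -> R).

Let CK := kin_rel y k.
Let tCB := kin_rel ty tb.

Definition rw_translation : Prop :=
  [/\
      (forall i, CK i -> tCB (h i)),
      (forall i', tCB i' -> exists2 i, CK i & h i = i') &
      (forall i j', CK i -> 0 <= lam i j')] /\
  [/\
      (forall i j', CK i -> 0 < lam i j' -> tR (h i) j'),
      (forall i' j', tCB i' -> \sum_(i | CK i && (h i == i')) lam i j' = tb i' j'),
      (forall i, CK i -> react_vec y k i =
          \sum_(j' | j' != h i) lam i j' *: (cvec (ty j') - cvec (ty (h i)))) &
      (forall i', tCB i' -> [/\ CK (hK i'), h (hK i') = i' &
                                 forall s, tyK i' s = (y (hK i') s)%:R])].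

Definition improper : Prop :=
  exists i j, [/\ CK i, CK j, i != j & h i = h j].

Definition CI : pred 'I_mt := fun k' =>
  tCB k' && [exists i, exists j, [&& i != j, CK i, CK j, h i == k' & h j == k']].

Definition SI : 'M[R]_n :=
  (\sum_(p : 'I_m * 'I_m | [&& CK p.1, CK p.2, h p.1 == h p.2 & CI (h p.1)])
      <<cvec (y p.2) - cvec (y p.1)>>)%MS.

Definition resolving (CR : {set 'I_mt}) : Prop :=
  (forall i', i' \in CR -> tCB i') /\
  forall k' i j, CI k' -> CK i -> CK j -> h i = k' -> h j = k' ->
    exists c : 'I_mt -> 'I_mt -> R,
      [/\ cvec (y j) - cvec (y i) =
            \sum_(i' : 'I_mt) \sum_(j' : 'I_mt | (i' < j')%N)
               c i' j' *: (cvec (y (hK j')) - cvec (y (hK i'))),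
          (forall i' j' : 'I_mt, (i' < j')%N -> c i' j' != 0 -> connect (symR tR) i' j') &
          (forall i' j' : 'I_mt, (i' < j')%N -> c i' j' != 0 -> i' \in CR /\ j' \in CR)].
End Transl.
End CRN.

From HB Require Import structures.
From mathcomp Require Import all_boot all_order all_algebra.
From mathcomp Require Import boolp reals exp sequences zify.
Set Implicit Arguments. Unset Strict Implicit. Unset Printing Implicit Defensive.
Import Order.TTheory GRing.Theory Num.Theory.
Local Open Scope ring_scope.

(* At a positive state x the original right-hand side is the flux image of
   W(u,v) = sum_(h i = u) lam(i,v) x^(y i), and the translated one with weights K is
   the flux image of K(u,v) x^(y (hK u)).  Deficiency zero of the translation turns a
   vanishing flux image of a supported flux into flux balance at every complex.  Off
   C~_I both fluxes have the rows b(u,v) x^(y (hK u)), and we take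
   K(u,v) = sum_(h i = u) lam(i,v) x_r^(y i) / x_r^(y (hK u)) for a reference steady
   state x_r.

   Call a complex shadowed when some p in C~_I reaches it without passing through the
   cut vertex k'(p).  The cut hypothesis says that C~_R is unshadowed, and every shadowed
   complex has a unique unshadowed exit.  For two balanced fluxes with rows
   kap(u,v) z(u) and kap(u,v) z'(u) off C~_I, a level-set argument at a complex of
   maximal ratio z'/z shows that this ratio is constant along connected unshadowed
   complexes, hence on linkage classes of C~_R.  By the resolving property the ratio
   x^(y i) / x_r^(y i) is then constant on each fibre of h, which makes W and the
   resolved flux coincide at every steady state of either system. *)

Lemma fin_all_exists_in (T : finType) (P : pred T) (Q : T -> T -> Prop) :
  (forall p, P p -> exists c, Q p c) -> exists f : T -> T, forall p, P p -> Q p (f p).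
Proof.
move=> PQ; apply: (@fin_all_exists _ (fun=> T) (fun p c => P p -> Q p c)) => p.
by have [/PQ [c Qc]|_] := boolP (P p); [exists c | exists p].
Qed.

Section Shadow.
Variables (T : finType) (e : rel T) (src : pred T) (cut : T -> T).

Definition avoid_cut p : rel T := fun u v => e u v && (v != cut p).
Definition shadowed v := [exists p, src p && connect (avoid_cut p) p v].
Definition shadow_edge : rel T := fun u v => e u v && shadowed u.

Lemma shadowed_src p : src p -> shadowed p.
Proof. by move=> sp; apply/existsP; exists p; rewrite sp connect0. Qed.

Lemma unshadowed_src v : ~~ shadowed v -> ~~ src v.
Proof. by apply: contra; apply: shadowed_src. Qed.

Lemma shadow_edge_unshadowed v t : ~~ shadowed v -> connect shadow_edge v t -> t = v.
Proof.
move=> nv /connectP [[|x s] //= /andP [/andP [_ sv] _] _].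
by rewrite sv in nv.
Qed.

Lemma path_avoid_cut p v s :
  path shadow_edge v s -> cut p \notin s -> path (avoid_cut p) v s.
Proof.
elim: s v => [//|x s IH] v /= /andP [/andP [evx _] Hs].
by rewrite in_cons negb_or => /andP [nx ns]; rewrite /avoid_cut evx eq_sym nx IH.
Qed.

Lemma avoid_cut_notin p v s : path (avoid_cut p) v s -> cut p \notin s.
Proof.
elim: s v => [//|x s IH] v /= /andP [/andP [_ nx] Ps].
by rewrite in_cons negb_or eq_sym nx (IH x).
Qed.

Lemma shadow_path_cut p v s : src p -> connect (avoid_cut p) p v ->
  path shadow_edge v s -> ~~ shadowed (last v s) -> cut p \in s.
Proof.
move=> sp cpv Ps; apply: contraR => ns; apply/existsP; exists p.
by rewrite sp (connect_trans cpv) //; apply/connectP; exists s => //; apply: path_avoid_cut.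
Qed.

Lemma shadow_exit_unique_size N v s1 s2 : (size s1 < N)%N ->
  path shadow_edge v s1 -> ~~ shadowed (last v s1) ->
  path shadow_edge v s2 -> ~~ shadowed (last v s2) -> last v s1 = last v s2.
Proof.
elim: N v s1 s2 => [//|N IH] v s1 s2 Hsz P1 N1 P2 N2.
have exit_of w s : ~~ shadowed w -> path shadow_edge w s -> last w s = w.
  by move=> nw Ps; apply: shadow_edge_unshadowed nw _; apply/connectP; exists s.
have [nv|/negbNE/existsP [p /andP [sp cpv]]] := boolP (~~ shadowed v).
  by rewrite !exit_of.
have k1 := shadow_path_cut sp cpv P1 N1; have k2 := shadow_path_cut sp cpv P2 N2.
move: P1 N1 Hsz; case/splitPr: k1 => [a1 b1].
rewrite cat_path last_cat /= => /and3P [_ _ Pb1] Nb1 Hsz.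
move: P2 N2; case/splitPr: k2 => [a2 b2].
rewrite cat_path last_cat /= => /and3P [_ _ Pb2] Nb2.
have [nk|sk] := boolP (~~ shadowed (cut p)); first by rewrite !exit_of.
by apply: IH => //; move: Hsz; rewrite size_cat /=; lia.
Qed.

Lemma shadow_exit_unique v t1 t2 :
  connect shadow_edge v t1 -> ~~ shadowed t1 ->
  connect shadow_edge v t2 -> ~~ shadowed t2 -> t1 = t2.
Proof.
move=> /connectP [s1 P1 ->] N1 /connectP [s2 P2 ->] N2.
exact: (@shadow_exit_unique_size (size s1).+1).
Qed.

Lemma shadow_exit_exists u a : connect e u a -> ~~ shadowed a ->
  exists2 t, connect shadow_edge u t & ~~ shadowed t.
Proof.
move=> /connectP [s Ps ->]; elim: s u Ps => [|x s IH] u /=; first by exists u.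
move=> /andP [eux Ps] Na; have [nu|su] := boolP (~~ shadowed u); first by exists u.
have [t ct Nt] := IH x Ps Na; exists t => //.
by apply: connect_trans ct; apply: connect1; rewrite /shadow_edge eux (negbNE su).
Qed.

Lemma unshadowed_cut a : (forall p, src p -> cut p != p) ->
  (forall p, src p -> forall s, path e p s -> last p s = a -> uniq (p :: s) ->
     cut p \in p :: s) ->
  ~~ shadowed a.
Proof.
move=> cut_neq cut_on; apply/existsP => -[p /andP [sp /connectP [s Ps la]]].
move: la; case: (shortenP Ps) => s' Ps' us' sub_s' la.
have Ps'e : path e p s' by apply: sub_path Ps' => u v /andP [].
have := cut_on p sp s' Ps'e (esym la) us'.
rewrite in_cons => /orP [/eqP cpp|/sub_s' cs].
  by move: (cut_neq p sp); rewrite cpp eqxx.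
by rewrite (negPf (avoid_cut_notin Ps)) in cs.
Qed.
End Shadow.

Lemma connect_back_closed (T : finType) (e : rel T) (X : pred T) :
  (forall v u, e v u -> X u -> X v) -> forall v w, connect e v w -> X w -> X v.
Proof.
move=> Xe v w /connectP [s Ps ->]; elim: s v Ps => [//|x s IH] v /= /andP [evx Ps] Xw.
exact: Xe evx (IH x Ps Xw).
Qed.

Definition balanced (R : zmodType) (T : finType) (V : T -> T -> R) :=
  forall v, \sum_u V v u = \sum_u V u v.

Lemma balanced_cut_flux (R : zmodType) (T : finType) (V : T -> T -> R) (X : pred T) :
  balanced V ->
  \sum_(v | X v) \sum_(u | ~~ X u) V v u = \sum_(v | ~~ X v) \sum_(u | X u) V v u.
Proof.
move=> Vbal; have : \sum_(v | X v) \sum_u V v u = \sum_(v | X v) \sum_u V u v.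
  by apply: eq_bigr => v _; apply: Vbal.
under eq_bigr do rewrite (bigID X).
rewrite big_split /= [in RHS]exchange_big /= [in RHS](bigID X) /=.
by move/addrI.
Qed.

Section FluxRatio.
Variables (R : realFieldType) (T : finType) (e : rel T) (src : pred T) (cut : T -> T).
Variables (kap W W' : T -> T -> R) (z z' : T -> R).
Hypothesis kap_gt0 : forall u v, e u v -> 0 < kap u v.
Hypotheses (W_row : forall u, ~~ src u -> forall v, W u v = kap u v * z u)
           (W'_row : forall u, ~~ src u -> forall v, W' u v = kap u v * z' u).
Hypotheses (W_supp : forall u v, ~~ e u v -> W u v = 0)
           (W'_supp : forall u v, ~~ e u v -> W' u v = 0).
Hypotheses (z_gt0 : forall u, 0 < z u) (W_bal : balanced W) (W'_bal : balanced W').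
Hypothesis e_sym : connect_sym e.

Local Notation shadowed := (shadowed e src cut).
Local Notation shadow_edge := (shadow_edge e src cut).
Let ratio v := z' v / z v.

Section LevelSet.
Variables (a : T) (M : R).
Hypothesis a_unshadowed : ~~ shadowed a.
Hypothesis ratio_le : forall v, connect e a v -> ~~ shadowed v -> ratio v <= M.

Let level v := connect e a v &&
  [forall t, connect shadow_edge v t && ~~ shadowed t ==> (ratio t == M)].

Lemma level_unshadowed v : ~~ shadowed v -> level v = connect e a v && (ratio v == M).
Proof.
move=> nv; congr (_ && _); apply/forallP/idP => [/(_ v)|/eqP rv t].
  by rewrite connect0 nv.
by apply/implyP => /andP [/(shadow_edge_unshadowed nv) -> _]; rewrite rv.
Qed.

Lemma level_succ v u : level v -> shadowed v -> e v u -> level u.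
Proof.
move=> /andP [av /forallP lv] sv evu; rewrite /level (connect_trans av (connect1 evu)).
apply/forallP => t; apply/implyP => /andP [ut nt]; apply: (implyP (lv t)).
by rewrite nt andbT (connect_trans _ ut) // connect1 // /shadow_edge evu sv.
Qed.

Lemma level_pred v u : shadowed v -> e v u -> level u -> level v.
Proof.
move=> sv evu /andP [au /forallP lu].
have vu : connect shadow_edge v u by apply: connect1; rewrite /shadow_edge evu sv.
have ua : connect e u a by rewrite e_sym.
have [t' ut' nt'] := shadow_exit_exists ua a_unshadowed.
have av : connect e a v by rewrite e_sym (connect_trans (connect1 evu)).
rewrite /level av /=.
apply/forallP => t; apply/implyP => /andP [vt nt].
by rewrite (shadow_exit_unique vt nt (connect_trans vu ut') nt') (implyP (lu t')) ?ut'.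
Qed.

Lemma level_out_flux v u : level v -> ~~ level u -> W' v u = M * W v u.
Proof.
move=> lv nlu; have [evu|nevu] := boolP (e v u); last by rewrite W_supp // W'_supp // mulr0.
have [nv|/negbNE sv] := boolP (~~ shadowed v); last first.
  by rewrite (level_succ lv sv evu) in nlu.
move: lv; rewrite level_unshadowed // => /andP [_ /eqP rv].
have nsv := unshadowed_src nv.
by rewrite W_row // W'_row // -rv /ratio mulrCA divfK ?gt_eqF.
Qed.

Lemma level_in_flux v u : ~~ level v -> level u -> W' v u <= M * W v u ?= iff ~~ e v u.
Proof.
move=> nlv lu; have [evu|nevu] /= := boolP (e v u); last first.
  by rewrite W_supp // W'_supp // mulr0; apply/leif_refl.
have [nv|/negbNE sv] := boolP (~~ shadowed v); last first.
  by rewrite (level_pred sv evu lu) in nlv.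
have av : connect e a v.
  by rewrite e_sym (connect_trans (connect1 evu)) // -e_sym; case/andP: lu.
have rlt : ratio v < M.
  by rewrite lt_neqAle ratio_le // andbT; move: nlv; rewrite level_unshadowed // av.
have nsv := unshadowed_src nv.
apply/leifP; rewrite W_row // W'_row // -[z' v](@divfK _ (z v)) ?gt_eqF //.
by rewrite mulrCA ltr_pM2r // mulr_gt0 ?kap_gt0.
Qed.

(* Balance forces equal flux across the cut in both directions, outgoing
   [W' = M W] and incoming [W' <= M W], so incoming edges carry no flux. *)
Lemma level_no_entry v u : ~~ level v -> level u -> ~~ e v u.
Proof.
have flux_eq : \sum_(v | ~~ level v) \sum_(u | level u) W' v u =
               \sum_(v | ~~ level v) \sum_(u | level u) M * W v u.
  rewrite -balanced_cut_flux // (eq_bigr (fun v => M * \sum_(u | ~~ level u) W v u)).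
    rewrite -mulr_sumr balanced_cut_flux // mulr_sumr.
    by under eq_bigr do rewrite mulr_sumr.
  by move=> w lw; rewrite mulr_sumr; apply: eq_bigr => t nlt; apply: level_out_flux.
have flux_le := leif_sum (fun w nlw => leif_sum (fun t lvt => @level_in_flux w t nlw lvt)).
move: (flux_le.2); rewrite flux_eq eqxx => /esym/forallP all_no_entry nlv lu.
by move: (all_no_entry v); rewrite nlv => /forallP /(_ u); rewrite lu.
Qed.

Lemma level_back_closed v w : connect e v w -> level w -> level v.
Proof.
apply: connect_back_closed => t u etu lu; apply/negPn/negP => nlt.
by move: (level_no_entry nlt lu); rewrite etu.
Qed.
End LevelSet.

Lemma ratio_unshadowed a b : ~~ shadowed a -> ~~ shadowed b -> connect e a b ->
  z' a / z a = z' b / z b.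
Proof.
move=> na nb ab.
have a_in : connect e a a && ~~ shadowed a by rewrite connect0.
have [v0 /andP [av0 nv0] v0_max] :=
  @arg_maxP _ _ T a [pred v | connect e a v && ~~ shadowed v] ratio a_in.
have ratio_le v : connect e a v -> ~~ shadowed v -> ratio v <= ratio v0.
  by move=> av nv; apply: v0_max; rewrite inE av.
have ratio_max v : ~~ shadowed v -> connect e v v0 -> ratio v = ratio v0.
  move=> nv vv0; have := level_back_closed na ratio_le vv0.
  by rewrite !level_unshadowed // av0 eqxx => /(_ isT) /andP [_ /eqP].
by change (ratio a = ratio b); rewrite !ratio_max // (connect_trans _ av0) // e_sym.
Qed.
End FluxRatio.

Section Monomial.
Variables (R : realType) (n : nat).
Implicit Types (x : 'cV[R]_n) (w : 'rV[R]_n).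

Definition logv x : 'cV[R]_n := \col_s ln (x s 0).

Definition monomial x w : R := \prod_s x s 0 `^ w 0 s.

Lemma monomialE x w : pos_vec x -> monomial x w = expR ((w *m logv x) 0 0).
Proof.
move=> px; rewrite !mxE expR_sum; apply: eq_bigr => s _.
by rewrite /powR gt_eqF // mxE.
Qed.

Lemma monomial_gt0 x w : pos_vec x -> 0 < monomial x w.
Proof. by move=> px; rewrite monomialE ?expR_gt0. Qed.

Lemma monomial_ratio_eq x x' w w' : pos_vec x -> pos_vec x' ->
  monomial x w / monomial x' w = monomial x w' / monomial x' w' <->
  (w - w') *m (logv x - logv x') = 0.
Proof.
move=> px px'; rewrite !monomialE // -!expRB.
have entry v : (v *m logv x) 0 0 - (v *m logv x') 0 0 = (v *m (logv x - logv x')) 0 0.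
  by rewrite mulmxBr !mxE -sumrB.
have entryB (A B : 'M[R]_1) : (A - B) 0 0 = A 0 0 - B 0 0 by rewrite !mxE.
rewrite !entry; split => [/expR_inj eq_entry|w0].
  by rewrite [LHS]mx11_scalar mulmxBl entryB eq_entry subrr raddf0.
by apply/congr1/eqP; rewrite -subr_eq0 -entryB -mulmxBl w0 mxE.
Qed.

Lemma Psi_monomial m (yK : 'I_m -> 'I_n -> R) x i :
  Psi yK x i 0 = monomial x (rvec (yK i)).
Proof. by rewrite !mxE; apply: eq_bigr => s _; rewrite mxE. Qed.
End Monomial.

Lemma gma_rhs_react_vec (R : realType) (n m : nat) (y : 'I_m -> 'I_n -> nat)
  (k : 'I_m -> 'I_m -> R) (yK : 'I_m -> 'I_n -> R) (x : 'cV[R]_n) :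
  gma_rhs y k yK x = (\sum_j Psi yK x j 0 *: react_vec y k j)^T.
Proof.
apply/matrixP => s o; rewrite !mxE (ord1 o) summxE.
apply: eq_bigr => j _; rewrite !mxE mulrC; congr (_ * _).
rewrite /react_vec summxE (bigD1 j) //= !mxE eqxx.
rewrite [X in _ + X = _](eq_bigr (fun i => (y i s)%:R * k j i)); last first.
  by move=> i /negbTE nij; rewrite !mxE nij.
rewrite [RHS](eq_bigr (fun i => k j i * (y i s)%:R - k j i * (y j s)%:R)); last first.
  by move=> i _; rewrite !mxE mulrBr.
rewrite sumrB addrC; congr (_ + _); first by apply: eq_bigr => i _; rewrite mulrC.
by rewrite mulrN -mulr_suml mulrC.
Qed.

Section WeightSet.
Variables (R : realType) (m : nat) (Rr : rel 'I_m) (k : 'I_m -> 'I_m -> R).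
Hypothesis k_ws : weight_set Rr k.

Lemma weight_set_gt0 i j : Rr i j -> 0 < k i j.
Proof. by case: (k_ws i j). Qed.

Lemma weight_set_eq0 i j : ~~ Rr i j -> k i j = 0.
Proof. by case: (k_ws i j). Qed.

Lemma weight_set_ge0 i j : 0 <= k i j.
Proof. by have [/weight_set_gt0/ltW|/weight_set_eq0->] := boolP (Rr i j). Qed.
End WeightSet.

Lemma symR_connect_sym m (Rr : rel 'I_m) : connect_sym (symR Rr).
Proof. by apply: sym_connect_sym => u v; rewrite /symR orbC. Qed.

Lemma weakly_reversible_connect_sym m (Rr : rel 'I_m) :
  weakly_reversible Rr -> connect_sym Rr.
Proof.
have sub_sym i j : connect Rr i j -> connect (symR Rr) j i.
  rewrite symR_connect_sym; apply: connect_sub => u v e.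
  by rewrite connect1 // /symR e.
by move=> wr i j; apply/idP/idP => /sub_sym/wr.
Qed.

Section DeficiencyZero.
Variables (R : realType) (n mt : nat) (ty : 'I_mt -> 'I_n -> nat) (tR : rel 'I_mt).

Local Notation erow u := (delta_mx 0 u : 'rV[R]_mt).

Definition flux_image (f : 'I_mt -> 'I_mt -> R) : 'rV[R]_n :=
  \sum_u \sum_v f u v *: (cvec R (ty v) - cvec R (ty u)).

Definition flux_vec (f : 'I_mt -> 'I_mt -> R) : 'rV[R]_mt :=
  \sum_u \sum_v f u v *: (erow v - erow u).

Definition reaction_space : 'M[R]_mt :=
  (\sum_(p : 'I_mt * 'I_mt | tR p.1 p.2) <<erow p.2 - erow p.1>>)%MS.

Definition linkage_mx : 'M[R]_mt :=
  \matrix_(u, r) (fingraph.root (symR tR) u == r)%:R.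

Local Notation Yt := (Ymx R ty)^T.

Lemma delta_Ymx u : erow u *m Yt = cvec R (ty u).
Proof. by rewrite -rowE; apply/rowP => s; rewrite !mxE. Qed.

Lemma rank_stoich_space : \rank (stoich_space R ty tR) = \rank (reaction_space *m Yt).
Proof.
rewrite sumsmxMr_gen; apply: eqmx_rank; apply/eqmxP; apply: eqmx_sums => p _.
apply: eqmx_trans (genmxE _) _; apply: eqmx_trans _ (eqmx_sym (genmxE _)).
by apply: eqmx_trans _ (eqmx_sym (eqmxMr Yt (genmxE _))); rewrite mulmxBl !delta_Ymx.
Qed.

Lemma reaction_space_sub_ker : (reaction_space <= kermx linkage_mx)%MS.
Proof.
apply/sumsmx_subP => p e; rewrite genmxE sub_kermx mulmxBl -!rowE.
suff -> : row p.2 linkage_mx = row p.1 linkage_mx by rewrite subrr.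
have /(fingraph.rootP (symR_connect_sym tR)) root_eq : connect (symR tR) p.1 p.2.
  by rewrite connect1 // /symR e.
by apply/rowP => r; rewrite !mxE root_eq.
Qed.

(* [linkage_mx] restricted to the linkage-class roots is the identity *)
Lemma n_linkage_le_rank : (n_linkage tR <= \rank linkage_mx)%N.
Proof.
set A := predI (fingraph.roots (symR tR)) (mem predT).
pose E : 'M[R]_(#|A|, mt) := \matrix_(k, u) (u == enum_val k)%:R.
have E_id : E *m linkage_mx *m E^T = 1%:M.
  apply/matrixP => k l; rewrite !mxE (bigD1 (enum_val l)) //= big1; last first.
    by move=> w /negbTE nw; rewrite !mxE nw mulr0.
  rewrite !mxE eqxx mulr1 addr0 (bigD1 (enum_val k)) //= big1; last first.
    by move=> w /negbTE nw; rewrite !mxE nw mul0r.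
  have : enum_val k \in A by apply: enum_valP.
  rewrite !mxE eqxx mul1r addr0 inE /= andbT => /eqP ->.
  by rewrite (inj_eq enum_val_inj) eq_sym.
rewrite /n_linkage -[n_comp _ _](mxrank1 R #|A|) -E_id.
exact: leq_trans (mxrankM_maxl _ _) (mxrankM_maxr _ _).
Qed.

Lemma rank_reaction_space : (\rank reaction_space <= mt - n_linkage tR)%N.
Proof.
apply: leq_trans (mxrankS reaction_space_sub_ker) _; rewrite mxrank_ker.
by have := n_linkage_le_rank; lia.
Qed.

Lemma flux_image_vec f : flux_image f = flux_vec f *m Yt.
Proof.
rewrite /flux_image /flux_vec mulmx_suml; apply: eq_bigr => u _; rewrite mulmx_suml.
by apply: eq_bigr => v _; rewrite -scalemxAl mulmxBl !delta_Ymx.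
Qed.

Lemma flux_vec_sub f :
  (forall u v, ~~ tR u v -> f u v = 0) -> (flux_vec f <= reaction_space)%MS.
Proof.
move=> f_supp; apply/summx_sub => u _; apply/summx_sub => v _.
have [e|ne] := boolP (tR u v); last by rewrite f_supp // scale0r sub0mx.
by apply: scalemx_sub; apply: (sumsmx_sup (u, v)) => //; rewrite genmxE.
Qed.

Lemma eq_flux_image f g : (forall u v, f u v = g u v) -> flux_image f = flux_image g.
Proof. by move=> fg; apply: eq_bigr => u _; apply: eq_bigr => v _; rewrite fg. Qed.

Lemma flux_vecE f w : flux_vec f 0 w = \sum_u f u w - \sum_v f w v.
Proof.
rewrite /flux_vec summxE.
under eq_bigr => u _.
  rewrite summxE (eq_bigr (fun v => f u v * (v == w)%:R - f u v * (u == w)%:R)); last first.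
    by move=> v _; rewrite !mxE mulrBr ![w == _]eq_sym.
  rewrite sumrB -big_distrl /= [_ * (u == w)%:R]mulrC.
  under eq_bigr => v _ do rewrite mulr_natr mulrb.
  rewrite -big_mkcond big_pred1_eq.
  over.
rewrite sumrB; under [X in _ - X]eq_bigr => u _ do rewrite mulr_natl mulrb.
by rewrite -big_mkcond big_pred1_eq.
Qed.

Hypothesis deficiency0 : deficiency R ty tR = 0.

(* its dimension is at most rank reaction_space - s <= (mt - l) - s = deficiency *)
Lemma deficiency0_cap_ker : (reaction_space :&: kermx Yt = 0)%MS.
Proof.
apply/eqP; rewrite -mxrank_eq0; apply/eqP.
have rank_sum : (\rank (stoich_space R ty tR) + n_linkage tR = mt)%N.
  move/eqP: deficiency0; rewrite /deficiency subr_eq0 subr_eq -PoszD => /eqP [].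
  lia.
have := rank_reaction_space; have := mxrank_mul_ker reaction_space Yt.
by rewrite -rank_stoich_space; lia.
Qed.

Lemma deficiency0_balanced f : (forall u v, ~~ tR u v -> f u v = 0) ->
  flux_image f = 0 -> balanced f.
Proof.
move=> f_supp f0 w; have : (flux_vec f <= reaction_space :&: kermx Yt)%MS.
  by rewrite sub_capmx flux_vec_sub //= sub_kermx -flux_image_vec f0.
rewrite deficiency0_cap_ker submx0 => /eqP /rowP /(_ w).
by rewrite flux_vecE mxE => /eqP; rewrite subr_eq0 => /eqP.
Qed.

Lemma deficiency0_source_kin_rel (b : 'I_mt -> 'I_mt -> R) u v :
  (forall u, ~~ tR u u) -> weight_set tR b -> tR u v -> kin_rel ty b u.
Proof.
move=> no_loop b_ws euv; apply/eqP => react0.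
pose f a c := if a == u then b u c else 0.
have f_supp a c : ~~ tR a c -> f a c = 0.
  by rewrite /f; case: eqP => // ->; apply: weight_set_eq0.
have : flux_image f = 0.
  rewrite /flux_image (bigD1 u) //= [X in _ + X]big1 ?addr0; last first.
    by move=> a /negbTE au; apply: big1 => c _; rewrite /f au scale0r.
  rewrite -[RHS]react0 /react_vec (bigD1 u) //= subrr scaler0 add0r.
  by apply: eq_bigr => c _; rewrite /f eqxx.
move/(deficiency0_balanced f_supp)/(_ u); rewrite /f eqxx -big_mkcond big_pred1_eq.
rewrite (weight_set_eq0 b_ws (no_loop u)) => /psumr_eq0P b0.
by move: (weight_set_gt0 b_ws euv); rewrite b0 ?ltxx // => c _; apply: weight_set_ge0.
Qed.
End DeficiencyZero.

Section ResolvedTranslation.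
Variables (R : realType) (n m mt : nat).
Variables (y : 'I_m -> 'I_n -> nat) (k : 'I_m -> 'I_m -> R).
Variables (ty : 'I_mt -> 'I_n -> nat) (tyK : 'I_mt -> 'I_n -> R) (tR : rel 'I_mt)
          (tb : 'I_mt -> 'I_mt -> R).
Variables (h : 'I_m -> 'I_mt) (hK : 'I_mt -> 'I_m) (lam : 'I_m -> 'I_mt -> R).
Variables (CR : {set 'I_mt}) (cut : 'I_mt -> 'I_mt).

Local Notation CK := (kin_rel y k).
Local Notation tCB := (kin_rel ty tb).
Local Notation CIp := (CI y k ty tb h).
Local Notation shadowed := (shadowed tR CIp cut).
Local Notation mono x i := (monomial x (cvec R (y i))).

Hypotheses (tR_irrefl : forall u, ~~ tR u u) (tb_ws : weight_set tR tb).
Hypotheses (h_rel : forall i, CK i -> tCB (h i))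
           (lam_ge0 : forall i v, CK i -> 0 <= lam i v)
           (lam_tR : forall i v, CK i -> 0 < lam i v -> tR (h i) v)
           (lam_sum : forall u v, tCB u -> \sum_(i | CK i && (h i == u)) lam i v = tb u v)
           (react_lam : forall i, CK i -> react_vec y k i =
              \sum_(v | v != h i) lam i v *: (cvec R (ty v) - cvec R (ty (h i))))
           (hK_spec : forall u, tCB u ->
              [/\ CK (hK u), h (hK u) = u & forall s, tyK u s = (y (hK u) s)%:R]).
Hypotheses (tR_wr : weakly_reversible tR) (deficiency0 : deficiency R ty tR = 0).
Hypothesis CR_resolving : resolving y k ty tR tb h hK CR.
Hypotheses (cut_neq : forall p, CIp p -> cut p != p)
           (cut_on_paths : forall p, CIp p -> forall a, a \in CR -> forall s,
              path tR p s -> last p s = a -> uniq (p :: s) -> cut p \in p :: s).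

Lemma source_kin_rel u v : tR u v -> tCB u.
Proof. exact: deficiency0_source_kin_rel. Qed.

Lemma lam_eq0 i v : CK i -> ~~ tR (h i) v -> lam i v = 0.
Proof.
move=> CKi ne; apply/eqP; rewrite eq_le lam_ge0 // andbT leNgt.
by apply: contra ne; apply: lam_tR.
Qed.

Lemma fiber_notCI u : tCB u -> ~~ CIp u -> forall i, (CK i && (h i == u)) = (i == hK u).
Proof.
move=> Bu nCI i; have [CKh hh _] := hK_spec Bu.
apply/idP/eqP => [/andP [CKi /eqP hi]|->]; last by rewrite CKh hh eqxx.
apply/eqP; apply: contraNT nCI => ni; rewrite /CI Bu /=.
by apply/existsP; exists i; apply/existsP; exists (hK u); rewrite ni CKi CKh hi hh !eqxx.
Qed.

Definition admissible (F : 'I_mt -> 'I_mt -> R) (x : 'cV[R]_n) :=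
  [/\ forall u v, ~~ tR u v -> F u v = 0,
      forall u, ~~ CIp u -> forall v, F u v = tb u v * mono x (hK u) &
      balanced F].

Lemma CR_unshadowed a : a \in CR -> ~~ shadowed a.
Proof. by move=> aCR; apply: unshadowed_cut => // p Cp s; apply: cut_on_paths. Qed.

Section TwoAdmissible.
Variables (x x' : 'cV[R]_n) (F F' : 'I_mt -> 'I_mt -> R).
Hypotheses (px : pos_vec x) (px' : pos_vec x').
Hypotheses (F_ad : admissible F x) (F'_ad : admissible F' x').

Lemma admissible_CR_log a b : a \in CR -> b \in CR -> connect tR a b ->
  (cvec R (y (hK a)) - cvec R (y (hK b))) *m (logv x - logv x') = 0.
Proof.
move=> aCR bCR ab; case: F_ad F'_ad => F_supp F_row F_bal [F'_supp F'_row F'_bal].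
apply/monomial_ratio_eq => //.
apply: (ratio_unshadowed _ F'_row F_row F'_supp F_supp _ F'_bal F_bal _
          (CR_unshadowed aCR) (CR_unshadowed bCR) ab).
- exact: weight_set_gt0.
- by move=> u; apply: monomial_gt0.
- exact: weakly_reversible_connect_sym.
Qed.

Lemma admissible_fiber_log u i : CK i -> h i = u ->
  (cvec R (y i) - cvec R (y (hK u))) *m (logv x - logv x') = 0.
Proof.
move=> CKi hi; have Bu : tCB u by rewrite -hi h_rel.
have [CKh hh _] := hK_spec Bu.
have [CIu|nCIu] := boolP (CIp u); last first.
  have := fiber_notCI Bu nCIu i; rewrite CKi hi eqxx => /esym/eqP ->.
  by rewrite subrr mul0mx.
have [_ resolve] := CR_resolving.
have [c [-> c_link c_CR]] := resolve u (hK u) i CIu CKh CKi hh hi.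
rewrite mulmx_suml big1 // => a _; rewrite mulmx_suml big1 // => b ab.
have [->|cn] := eqVneq (c a b) 0; first by rewrite scale0r mul0mx.
have [aCR bCR] := c_CR _ _ ab cn.
have ba : connect tR b a.
  by rewrite (weakly_reversible_connect_sym tR_wr); apply/tR_wr/c_link.
by rewrite -scalemxAl admissible_CR_log ?scaler0.
Qed.
End TwoAdmissible.

(* If no positive steady state with an admissible flux exists, [xr] is arbitrary. *)
Lemma reference_point : exists2 xr : 'cV[R]_n, pos_vec xr &
  ((exists2 x, pos_vec x & exists F, admissible F x) -> exists F, admissible F xr).
Proof.
have [[x0 px0 F0]|none] := pselect (exists2 x, pos_vec x & exists F, admissible F x).
  by exists x0.
by exists (const_mx 1) => [s|/none//]; rewrite mxE ltr01.
Qed.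

Lemma fiber_sum_notCI u v (G : 'I_m -> R) : ~~ CIp u ->
  \sum_(i | CK i && (h i == u)) lam i v * G i = tb u v * G (hK u).
Proof.
move=> nCIu; have [Bu|nBu] := boolP (tCB u).
  rewrite -(lam_sum v Bu) !(eq_bigl _ _ (fiber_notCI Bu nCIu)) !big_pred1_eq.
  by [].
rewrite big1; last by move=> i /andP [CKi /eqP hi]; rewrite -hi h_rel in nBu.
by rewrite (weight_set_eq0 tb_ws) ?mul0r //; apply: contra nBu; apply: source_kin_rel.
Qed.

Definition fiber_flux (x : 'cV[R]_n) u v : R :=
  \sum_(i | CK i && (h i == u)) lam i v * mono x i.

(* The paper's weights: each reaction of a fibre, rescaled to the kinetic complex
   [y (hK u)] at the reference point [xr]. *)
Definition resolved_weight (xr : 'cV[R]_n) u v : R :=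
  \sum_(i | CK i && (h i == u)) lam i v * (mono xr i / mono xr (hK u)).

Definition resolved_flux (xr x : 'cV[R]_n) u v : R :=
  resolved_weight xr u v * mono x (hK u).

Lemma fiber_weight_supp u v (G : 'I_m -> R) : ~~ tR u v ->
  \sum_(i | CK i && (h i == u)) lam i v * G i = 0.
Proof. by move=> nuv; apply: big1 => i /andP [CKi /eqP hi]; rewrite lam_eq0 ?mul0r ?hi. Qed.

Lemma ma_rhs_fiber_flux x : ma_rhs y k x = (flux_image ty (fiber_flux x))^T.
Proof.
rewrite /ma_rhs gma_rhs_react_vec; congr _^T.
rewrite (bigID CK) /= [X in _ + X]big1 ?addr0; last first.
  by move=> i; rewrite /kin_rel negbK => /eqP ->; rewrite scaler0.
rewrite (partition_big h predT) //=; apply: eq_bigr => u _.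
under [RHS]eq_bigr do rewrite scaler_suml.
rewrite [RHS]exchange_big; apply: eq_bigr => i /andP [CKi /eqP <-].
rewrite react_lam // scaler_sumr [RHS](bigD1 (h i)) //= subrr scaler0 add0r.
by apply: eq_bigr => v _; rewrite scalerA mulrC Psi_monomial.
Qed.

Lemma gma_rhs_resolved_flux xr x :
  gma_rhs ty (resolved_weight xr) tyK x = (flux_image ty (resolved_flux xr x))^T.
Proof.
rewrite gma_rhs_react_vec; congr _^T; apply: eq_bigr => u _.
rewrite /react_vec scaler_sumr [RHS](bigD1 u) //= subrr scaler0 add0r.
apply: eq_bigr => v _; rewrite scalerA /resolved_flux mulrC Psi_monomial.
have [euv|nuv] := boolP (tR u v).
  have [_ _ tyK_hK] := hK_spec (source_kin_rel euv).
  by congr (_ * _ *: _); congr monomial; apply/rowP => s; rewrite !mxE tyK_hK.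
by rewrite /resolved_weight fiber_weight_supp ?mulr0 ?mul0r.
Qed.

Section Reference.
Variable xr : 'cV[R]_n.
Hypothesis pxr : pos_vec xr.

Lemma resolved_weight_notCI u v : ~~ CIp u -> resolved_weight xr u v = tb u v.
Proof.
move=> nCIu; rewrite /resolved_weight fiber_sum_notCI //.
by rewrite divff ?mulr1 // gt_eqF // monomial_gt0.
Qed.

Lemma resolved_weight_ws : weight_set tR (resolved_weight xr).
Proof.
move=> u v; split; last exact: fiber_weight_supp.
move=> euv; have Bu := source_kin_rel euv.
have [i /and3P [CKi hi lam_gt0]|lam_le0] :=
  pickP (fun i => [&& CK i, h i == u & 0 < lam i v]).
  rewrite /resolved_weight (bigD1 i) ?CKi //= ltr_pwDl ?mulr_gt0 ?invr_gt0 ?monomial_gt0 //.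
  apply: sumr_ge0 => j /andP [/andP [CKj _] _].
  by rewrite mulr_ge0 ?lam_ge0 ?divr_ge0 ?ltW ?monomial_gt0.
have := weight_set_gt0 tb_ws euv; rewrite -(lam_sum v Bu).
rewrite big1 ?ltxx // => i /andP [CKi hi]; apply/eqP; rewrite eq_le lam_ge0 // andbT.
by have := lam_le0 i; rewrite CKi hi /= => /negbT; rewrite -leNgt.
Qed.

Lemma fiber_flux_admissible x : flux_image ty (fiber_flux x) = 0 ->
  admissible (fiber_flux x) x.
Proof.
move=> image0; split=> [u v|u nCIu v|]; first exact: fiber_weight_supp.
  exact: fiber_sum_notCI.
by apply: (deficiency0_balanced deficiency0) image0 => u v; apply: fiber_weight_supp.
Qed.

Lemma resolved_flux_admissible x : flux_image ty (resolved_flux xr x) = 0 ->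
  admissible (resolved_flux xr x) x.
Proof.
have supp u v : ~~ tR u v -> resolved_flux xr x u v = 0.
  by move=> nuv; rewrite /resolved_flux /resolved_weight fiber_weight_supp ?mul0r.
move=> image0; split=> [|u nCIu v|]; first exact: supp.
  by rewrite /resolved_flux resolved_weight_notCI.
exact: (deficiency0_balanced deficiency0) image0.
Qed.

Hypothesis xr_ref : (exists2 x, pos_vec x & exists F, admissible F x) ->
  exists F, admissible F xr.

Lemma resolved_flux_fiber x F : pos_vec x -> admissible F x ->
  forall u v, resolved_flux xr x u v = fiber_flux x u v.
Proof.
move=> px F_ad; have [F' F'_ad] := xr_ref (ex_intro2 _ _ x px (ex_intro _ F F_ad)).
move=> u v; rewrite /resolved_flux /resolved_weight mulr_suml.
apply: eq_bigr => i /andP [CKi /eqP hi]; rewrite -mulrA; congr (_ * _).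
have /monomial_ratio_eq := admissible_fiber_log px pxr F_ad F'_ad CKi hi.
move=> /(_ px pxr) ratio_eq.
rewrite -[RHS](@divfK _ (mono xr i)) ?gt_eqF ?monomial_gt0 // ratio_eq.
by rewrite [LHS]mulrAC [RHS]mulrAC (mulrC (mono xr i)).
Qed.

Lemma resolved_steady_state x : pos_vec x ->
  flux_image ty (fiber_flux x) = 0 <-> flux_image ty (resolved_flux xr x) = 0.
Proof.
move=> px; split=> image0.
  by rewrite (eq_flux_image ty (resolved_flux_fiber px (fiber_flux_admissible image0))).
by rewrite -(eq_flux_image ty (resolved_flux_fiber px (resolved_flux_admissible image0))).
Qed.
End Reference.

Lemma resolved_translation_steady_states :
  exists tK : 'I_mt -> 'I_mt -> R, weight_set tR tK /\
    forall x, pos_vec x -> (ma_rhs y k x = 0 <-> gma_rhs ty tK tyK x = 0).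
Proof.
have [xr pxr xr_ref] := reference_point.
exists (resolved_weight xr); split=> [|x px]; first exact: resolved_weight_ws.
have trmx_eq0P (A : 'rV[R]_n) : A^T = 0 <-> A = 0.
  by split=> [/eqP|->]; rewrite ?trmx0 // trmx_eq0 => /eqP.
rewrite ma_rhs_fiber_flux gma_rhs_resolved_flux !trmx_eq0P.
exact: resolved_steady_state.
Qed.
End ResolvedTranslation.

Theorem lemma6p1 (R : realType) (n m mt : nat)
  (y : 'I_m -> 'I_n -> nat) (Rr : rel 'I_m) (k : 'I_m -> 'I_m -> R)
  (ty : 'I_mt -> 'I_n -> nat) (tyK : 'I_mt -> 'I_n -> R) (tR : rel 'I_mt)
  (tb : 'I_mt -> 'I_mt -> R)
  (h : 'I_m -> 'I_mt) (hK : 'I_mt -> 'I_m) (lam : 'I_m -> 'I_mt -> R) :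
  is_crn y Rr -> weight_set Rr k ->
  is_crn ty tR -> weight_set tR tb ->
  rw_translation y k ty tyK tR tb h hK lam ->
  improper y k h ->
  weakly_reversible tR ->
  deficiency R ty tR = 0 ->
  (SI y k ty tb h <= kin_space tyK tR)%MS ->
  forall CR : {set 'I_mt},
  resolving y k ty tR tb h hK CR ->
  (forall i', i' \in CR -> ~~ CI y k ty tb h i') ->
  (forall p', CI y k ty tb h p' ->
     exists k', [/\ kin_rel ty tb k', k' != p' &
       forall i', i' \in CR -> forall s : seq 'I_mt,
         path tR p' s -> last p' s = i' -> uniq (p' :: s) -> k' \in p' :: s]) ->
  exists tK : 'I_mt -> 'I_mt -> R, weight_set tR tK /\
    forall x : 'cV[R]_n, pos_vec x ->
      (ma_rhs y k x = 0 <-> gma_rhs ty tK tyK x = 0).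
Proof.
move=> _ _ [_ tR_irrefl] tb_ws [[h_rel _ lam_ge0] [lam_tR lam_sum react_lam hK_spec]] _
  tR_wr deficiency0 _ CR CR_resolving _ cut_spec.
have [cut cut_prop] := fin_all_exists_in cut_spec.
apply: (resolved_translation_steady_states tR_irrefl tb_ws h_rel lam_ge0 lam_tR
  lam_sum react_lam hK_spec tR_wr deficiency0 CR_resolving (cut := cut)).
- by move=> p /cut_prop [].
- by move=> p /cut_prop [].
Qed.
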